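(* Let $I\subseteq\mathbb N$ be a finite index set and let $\{\varphi_n:n\in I\}\subseteq\mathcal H$ be a Riesz basis for its span $\mathcal T=\operatorname{span}\{\varphi_n:n\in I\}$ with constants $d_1,d_2$. Let $I$ be partitioned into disjoint subsets $I_1,\dots,I_r$ and set $\mathcal T_i=\operatorname{span}\{\varphi_n:n\in I_i\}$. Then for all $z\ge0$, $$E(\mathcal T,z)\le\sqrt{\frac{d_2}{d_1}\sum_{i=1}^rE(\mathcal T_i,z)^2},$$ and, for a sequence $\{\omega_n\}_{n\in\mathbb Z}$ giving rise to a Fourier frame for $\mathcal H$ and every $N\in\mathbb N$, $$\tilde E(\mathcal T,N)\le\sqrt{\frac{d_2}{d_1}\sum_{i=1}^r\tilde E(\mathcal T_i,N)^2}.$$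
   Context: $\mathcal H=\{f\in L^2(\mathbb R):\operatorname{supp}f\subseteq[0,1]\}$; $\hat f(\omega)=\int f(x)e^{-2\pi i\omega x}dx$; $\|g\|_J^2=\int_J|g|^2$. Riesz basis with constants $d_1,d_2$: $d_1\sum|a_n|^2\le\|\sum a_n\varphi_n\|^2\le d_2\sum|a_n|^2$ for all coefficients. $E(\mathcal U,z)=\sup\{\|\hat f\|_{\mathbb R\setminus(-z,z)}:f\in\mathcal U,\|f\|=1\}$. A sequence $\{\omega_n\}_{n\in\mathbb Z}$ gives rise to a Fourier frame for $\mathcal H$ if there are $0<A\le B<\infty$ with $A\|f\|^2\le\sum_n|\hat f(\omega_n)|^2\le B\|f\|^2$ for all $f\in\mathcal H$; then $\tilde E(\mathcal U,N)^2=\sup\{\sum_{|n|>N}|\hat f(\omega_n)|^2:f\in\mathcal U,\|f\|=1\}$. *)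

From mathcomp Require Import all_boot all_order all_algebra.
From mathcomp Require Import all_classical all_reals all_analysis.
From mathcomp Require Import complex.
Import Order.TTheory GRing.Theory Num.Theory.
Set Implicit Arguments. Unset Strict Implicit. Unset Printing Implicit Defensive.
Local Open Scope classical_set_scope.
Local Open Scope ring_scope.

Section Defs.
Variable R : realType.
Local Notation C := (R[i]).
Local Notation mu := (@lebesgue_measure R).

Definition sqmod (z : C) : R := (complex.Re z) ^+ 2 + (complex.Im z) ^+ 2.

Definition hnorm2 (f : R -> C) : \bar R :=
  (\int[mu]_(x in [set: R]) (sqmod (f x))%:E)%E.

(* f is (a representative of) an element of H = {f in L^2(R) : supp f in [0,1]} *)
Definition inH (f : R -> C) : Prop :=
  [/\ measurable_fun [set: R] (fun x => complex.Re (f x)),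
      measurable_fun [set: R] (fun x => complex.Im (f x)),
      (forall x, (x < 0) \/ (1 < x) -> f x = 0) &
      (hnorm2 f < +oo)%E].

(* \hat f(w) = \int f(x) e^{-2 pi i w x} dx, split into real and imaginary parts *)
Definition fourier (f : R -> C) (w : R) : C :=
  Complex
    (Rintegral mu [set: R] (fun x => complex.Re (f x) * cos (2 * pi * w * x)
                                   + complex.Im (f x) * sin (2 * pi * w * x)))
    (Rintegral mu [set: R] (fun x => complex.Im (f x) * cos (2 * pi * w * x)
                                   - complex.Re (f x) * sin (2 * pi * w * x))).

Definition hat_tail2 (f : R -> C) (z : R) : \bar R :=
  (\int[mu]_(w in [set w : R | (z <= `|w|)%R]) (sqmod (fourier f w))%:E)%E.

(* E(U,z) = sup { ||\hat f||_{R\(-z,z)} : f in U, ||f|| = 1 }  (sup of the empty set := 0) *)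
Definition Econc (U : set (R -> C)) (z : R) : \bar R :=
  ereal_sup ([set 0%E] `|`
    [set sqrte (hat_tail2 f z) | f in [set f | U f /\ inH f /\ hnorm2 f = 1%E]]).

Definition Etilde (w : int -> R) (U : set (R -> C)) (N : nat) : \bar R :=
  sqrte (ereal_sup ([set 0%E] `|`
    [set (\esum_(n in [set n : int | (N%:Z < `|n|)%R]) (sqmod (fourier f (w n)))%:E)%E
      | f in [set f | U f /\ inH f /\ hnorm2 f = 1%E]])).

Definition lincomb (I : finType) (phi : I -> R -> C) (P : pred I) (a : I -> C) : R -> C :=
  fun x => \sum_(n | P n) a n * phi n x.

Definition cspan (I : finType) (phi : I -> R -> C) (P : pred I) : set (R -> C) :=
  [set g | exists a : I -> C, g = lincomb phi P a].

Definition riesz_basis (I : finType) (phi : I -> R -> C) (d1 d2 : R) : Prop :=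
  [/\ 0 < d1, (forall n, inH (phi n)) &
      forall a : I -> C,
        (d1%:E * (\sum_n sqmod (a n))%:E <= hnorm2 (lincomb phi predT a))%E /\
        (hnorm2 (lincomb phi predT a) <= d2%:E * (\sum_n sqmod (a n))%:E)%E].

Definition fourier_frame (w : int -> R) : Prop :=
  exists A B : R, [/\ 0 < A, A <= B &
    forall f, inH f ->
      (A%:E * hnorm2 f <= \esum_(n in [set: int]) (sqmod (fourier f (w n)))%:E)%E /\
      (\esum_(n in [set: int]) (sqmod (fourier f (w n)))%:E <= B%:E * hnorm2 f)%E].

End Defs.

From mathcomp Require Import all_boot all_order all_algebra.
From mathcomp Require Import all_classical all_reals all_analysis.
From mathcomp Require Import complex.
From mathcomp Require Import measurable_realfun.
From mathcomp Require Import ring lra.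
Import Order.TTheory GRing.Theory Num.Theory.
Import numFieldNormedType.Exports.
Local Open Scope classical_set_scope.
Local Open Scope ring_scope.
Set Implicit Arguments. Unset Strict Implicit.

(* Write f = sum_i f_i with f_i in T_i, and let s_i be the squared l^2-norm of the
   coefficients of f_i, so that d1 * sum_i s_i <= ||f||^2 = 1 and ||f_i||^2 <= d2 * s_i.
   Pointwise, the weighted Cauchy-Schwarz inequality gives
   |\hat f|^2 <= (sum_i s_i) * sum_i |\hat f_i|^2 / s_i.  Both tail functionals are
   integrals (or sums) of |\hat f|^2, hence monotone and linear in it, and on T_i they are
   bounded by ||f_i||^2 E(T_i)^2 after normalising f_i.  Hence the tail of f is at most
   (sum_i s_i) * sum_i d2 E(T_i)^2 <= (d2/d1) sum_i E(T_i)^2. *)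

Section complex_modulus.
Variable R : realType.
Implicit Types (z u : R[i]) (k : R).

Lemma sqmod_ge0 z : 0 <= sqmod z.
Proof. by rewrite /sqmod addr_ge0 // sqr_ge0. Qed.

Lemma sqmod_eq0 z : sqmod z = 0 -> z = 0.
Proof.
case: z => x y; rewrite /sqmod /= => /eqP.
by rewrite paddr_eq0 ?sqr_ge0 // !sqrf_eq0 => /andP[/eqP -> /eqP ->].
Qed.

Lemma sqmodZ k z : sqmod (k%:C%C * z) = k ^+ 2 * sqmod z.
Proof. by case: z => x y; rewrite /sqmod /=; ring. Qed.

Lemma Re_sum (J : Type) (s : seq J) (P : pred J) (u : J -> R[i]) :
  complex.Re (\sum_(j <- s | P j) u j) = \sum_(j <- s | P j) complex.Re (u j).
Proof. exact: (raddf_sum (@complex.Re R : Rcomplex R -> R)). Qed.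

Lemma Im_sum (J : Type) (s : seq J) (P : pred J) (u : J -> R[i]) :
  complex.Im (\sum_(j <- s | P j) u j) = \sum_(j <- s | P j) complex.Im (u j).
Proof. exact: (raddf_sum (@complex.Im R : Rcomplex R -> R)). Qed.

Lemma complex_ReM z u :
  complex.Re (z * u) = complex.Re z * complex.Re u - complex.Im z * complex.Im u.
Proof. by case: z => ? ?; case: u => ? ?. Qed.

Lemma complex_ImM z u :
  complex.Im (z * u) = complex.Re z * complex.Im u + complex.Im z * complex.Re u.
Proof. by case: z => ? ?; case: u => ? ?. Qed.

End complex_modulus.

Section weighted_cauchy_schwarz.
Variables (R : realType) (I : finType) (s : I -> R).
Hypothesis s_ge0 : forall i, 0 <= s i.

Lemma sqr_wsum_le (q : I -> R) :
  (\sum_i s i * q i) ^+ 2 <= (\sum_i s i) * \sum_i s i * q i ^+ 2.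
Proof.
set T := \sum_i s i; set B := \sum_i s i * q i; set A := \sum_i s i * q i ^+ 2.
have [T0|T_gt0] := eqVneq T 0.
  have s0 i : s i = 0 by apply: (psumr_eq0P (fun i _ => s_ge0 i) T0).
  by rewrite /B big1 ?T0 ?expr0n ?mul0r //= => i _; rewrite s0 mul0r.
have expand : \sum_i s i * (T * q i - B) ^+ 2 = T * (T * A - B ^+ 2).
  transitivity (\sum_i (T ^+ 2 * (s i * q i ^+ 2) - 2 * T * B * (s i * q i) + B ^+ 2 * s i)).
    by apply: eq_bigr => i _; ring.
  by rewrite big_split sumrB -!mulr_sumr -/A -/B -/T /=; ring.
have : 0 <= T * (T * A - B ^+ 2).
  by rewrite -expand sumr_ge0 // => i _; rewrite mulr_ge0 ?sqr_ge0.
by rewrite pmulr_rge0 ?subr_ge0 // lt_def T_gt0 sumr_ge0.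
Qed.

Lemma sqr_sum_le_weighted (x : I -> R) : (forall i, s i = 0 -> x i = 0) ->
  (\sum_i x i) ^+ 2 <= (\sum_i s i) * \sum_i x i ^+ 2 / s i.
Proof.
move=> sx; have xE i : x i = s i * (x i / s i).
  by have [/[dup]/sx -> ->|si] := eqVneq (s i) 0; rewrite ?mul0r // mulrC divfK.
have x2E i : x i ^+ 2 / s i = s i * (x i / s i) ^+ 2.
  have [/[dup]/sx -> ->|si] := eqVneq (s i) 0; first by rewrite expr0n !mul0r.
  by field.
by rewrite (eq_bigr _ (fun i _ => xE i)) (eq_bigr _ (fun i _ => x2E i)) sqr_wsum_le.
Qed.

Lemma sqmod_sum_le_weighted (u : I -> R[i]) : (forall i, s i = 0 -> u i = 0) ->
  sqmod (\sum_i u i) <= (\sum_i s i) * \sum_i sqmod (u i) / s i.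
Proof.
move=> su; rewrite /sqmod Re_sum Im_sum.
rewrite [X in _ * X](eq_bigr (fun i => complex.Re (u i) ^+ 2 / s i + complex.Im (u i) ^+ 2 / s i));
  last by move=> i _; rewrite mulrDl.
have sRe i : s i = 0 -> complex.Re (u i) = 0 by move/su ->.
have sIm i : s i = 0 -> complex.Im (u i) = 0 by move/su ->.
have := sqr_sum_le_weighted sRe; have := sqr_sum_le_weighted sIm.
rewrite big_split /= mulrDr; lra.
Qed.

End weighted_cauchy_schwarz.

Section complex_integral.
Context (d : measure_display) (T : measurableType d) (R : realType).
Variable mu : {measure set T -> \bar R}.

Definition cintegral (g : T -> R[i]) : R[i] :=
  Complex (Rintegral mu [set: T] (fun x => complex.Re (g x)))
          (Rintegral mu [set: T] (fun x => complex.Im (g x))).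

Definition cintegrable (g : T -> R[i]) : Prop :=
  mu.-integrable [set: T] (EFin \o (fun x => complex.Re (g x))) /\
  mu.-integrable [set: T] (EFin \o (fun x => complex.Im (g x))).

Lemma Rintegral_sum (J : Type) (s : seq J) (P : pred J) (h : J -> T -> R) :
  (forall j, mu.-integrable [set: T] (EFin \o h j)) ->
  Rintegral mu [set: T] (fun x => \sum_(j <- s | P j) h j x) =
  \sum_(j <- s | P j) Rintegral mu [set: T] (h j).
Proof.
move=> hi; rewrite /Rintegral.
under eq_integral do rewrite -sumEFin.
by rewrite integral_sum // -EFin_sum_fine // => j _; exact: (integrable_fin_num _ (hi j)).
Qed.

Let integrableZl_EFin (a : R) (f : T -> R) :
  mu.-integrable [set: T] (EFin \o f) ->
  mu.-integrable [set: T] (EFin \o (fun x => a * f x)).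
Proof.
move=> fi; rewrite (_ : _ \o _ = (fun x => a%:E * (EFin \o f) x)%E); last first.
  by apply: funext => x; rewrite /= EFinM.
exact: integrableZl.
Qed.

Let integrable_lin (a b : R) (f g : T -> R) :
  mu.-integrable [set: T] (EFin \o f) -> mu.-integrable [set: T] (EFin \o g) ->
  mu.-integrable [set: T] (EFin \o (fun x => a * f x + b * g x)).
Proof.
move=> fi gi.
rewrite (_ : _ \o _ = ((EFin \o (fun x => a * f x)%R) \+ (EFin \o (fun x => b * g x)%R))%E) //.
by apply: integrableD => //; apply: integrableZl_EFin.
Qed.

Let Rintegral_lin (a b : R) (f g : T -> R) :
  mu.-integrable [set: T] (EFin \o f) -> mu.-integrable [set: T] (EFin \o g) ->
  Rintegral mu [set: T] (fun x => a * f x + b * g x) =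
  a * Rintegral mu [set: T] f + b * Rintegral mu [set: T] g.
Proof.
by move=> fi gi; rewrite RintegralD ?RintegralZl //; apply: integrableZl_EFin.
Qed.

Lemma cintegral_sum (J : Type) (s : seq J) (P : pred J) (a : J -> R[i]) (g : J -> T -> R[i]) :
  (forall j, cintegrable (g j)) ->
  cintegral (fun x => \sum_(j <- s | P j) a j * g j x) = \sum_(j <- s | P j) a j * cintegral (g j).
Proof.
move=> gi; apply/eqP; rewrite eq_complex /= Re_sum Im_sum; apply/andP; split; apply/eqP.
- transitivity (Rintegral mu [set: T] (fun x => \sum_(j <- s | P j)
    (complex.Re (a j) * complex.Re (g j x) + - complex.Im (a j) * complex.Im (g j x)))).
    congr Rintegral; apply: funext => x; rewrite Re_sum.
    by apply: eq_bigr => j _; rewrite complex_ReM mulNr.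
  rewrite Rintegral_sum; last by move=> j; case: (gi j) => ? ?; exact: integrable_lin.
  by apply: eq_bigr => j _; case: (gi j) => ? ?; rewrite Rintegral_lin // complex_ReM mulNr.
- transitivity (Rintegral mu [set: T] (fun x => \sum_(j <- s | P j)
    (complex.Re (a j) * complex.Im (g j x) + complex.Im (a j) * complex.Re (g j x)))).
    congr Rintegral; apply: funext => x; rewrite Im_sum.
    by apply: eq_bigr => j _; rewrite complex_ImM.
  rewrite Rintegral_sum; last by move=> j; case: (gi j) => ? ?; exact: integrable_lin.
  by apply: eq_bigr => j _; case: (gi j) => ? ?; rewrite Rintegral_lin // complex_ImM.
Qed.

End complex_integral.

Section fourier_transform.
Variable R : realType.
Local Notation mu := (@lebesgue_measure R).
Implicit Types (f : R -> R[i]) (w : R).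

Definition fourier_kernel (w x : R) : R[i] :=
  Complex (cos (2 * pi * w * x)) (- sin (2 * pi * w * x)).

Lemma Re_mul_fourier_kernel z w x : complex.Re (z * fourier_kernel w x) =
  complex.Re z * cos (2 * pi * w * x) + complex.Im z * sin (2 * pi * w * x).
Proof. by rewrite complex_ReM /=; ring. Qed.

Lemma Im_mul_fourier_kernel z w x : complex.Im (z * fourier_kernel w x) =
  complex.Im z * cos (2 * pi * w * x) + - complex.Re z * sin (2 * pi * w * x).
Proof. by rewrite complex_ImM /=; ring. Qed.

Lemma fourierE f w : fourier f w = cintegral mu (fun x => f x * fourier_kernel w x).
Proof.
rewrite /fourier /cintegral; congr Complex; congr Rintegral; apply: funext => x.
  by rewrite Re_mul_fourier_kernel.
by rewrite Im_mul_fourier_kernel mulNr.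
Qed.

Section trigonometric_combination.
Variables a b : R -> R.
Hypotheses (ma : measurable_fun [set: R] a) (mb : measurable_fun [set: R] b).
Hypothesis iab : mu.-integrable [set: R] (EFin \o (fun x => `|a x| + `|b x|)).

Let trig w x := a x * cos (2 * pi * w * x) + b x * sin (2 * pi * w * x).

Let normr_trig_le w x : `|trig w x| <= `|a x| + `|b x|.
Proof.
rewrite /trig; apply: le_trans (ler_normD _ _) _; rewrite !normrM.
by apply: lerD; rewrite ler_piMr // ?cos_max ?sin_max.
Qed.

Let continuous_trig x : continuous (trig ^~ x).
Proof.
have lin : continuous (fun w : R => 2 * pi * w * x).
  move=> w; apply: (@continuousM _ _ (fun w : R => 2 * pi * w) (fun=> x)); last exact: cvg_cst.
  by apply: (@continuousM _ _ (fun=> 2 * pi) id); [exact: cvg_cst|exact: cvg_id].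
move=> w; apply: (@continuousD _ _ _ (fun w => a x * cos (2 * pi * w * x))
                                     (fun w => b x * sin (2 * pi * w * x))).
- apply: (@continuousM _ _ (fun=> a x)); first exact: cvg_cst.
  exact: continuous_comp (lin w) (@continuous_cos R _).
- apply: (@continuousM _ _ (fun=> b x)); first exact: cvg_cst.
  exact: continuous_comp (lin w) (@continuous_sin R _).
Qed.

Let measurable_trig w : measurable_fun [set: R] (trig w).
Proof.
have mlin : measurable_fun [set: R] (fun x : R => 2 * pi * w * x).
  by apply: measurable_funM => //; exact: measurable_cst.
apply: measurable_funD; apply: measurable_funM => //.
  exact: measurableT_comp (continuous_measurable_fun (@continuous_cos R)) mlin.
exact: measurableT_comp (continuous_measurable_fun (@continuous_sin R)) mlin.
Qed.

Lemma integrable_trig w : mu.-integrable [set: R] (EFin \o trig w).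
Proof.
apply: le_integrable iab => //; first by apply/measurable_EFinP; exact: measurable_trig.
by move=> x _ /=; rewrite lee_fin [leRHS]ger0_norm ?addr_ge0.
Qed.

Lemma continuous_Rintegral_trig : continuous (fun w => Rintegral mu [set: R] (trig w)).
Proof.
move=> w0.
apply: (@continuity_under_integral R _ _ mu trig [set: R] measurableT
  (w0 - 1) (w0 + 1) _ _ _ iab).
- by move=> w _; exact: integrable_trig.
- by apply: aeW => x _ w _; exact: continuous_trig.
- by move=> w _; apply: aeW => x _; exact: normr_trig_le.
by rewrite inE /= in_itv /= gtrDl ltrDl ltrN10 ltr01.
Qed.

End trigonometric_combination.

Lemma integrable_normReIm f : inH f ->
  mu.-integrable [set: R] (EFin \o (fun x => `|complex.Re (f x)| + `|complex.Im (f x)|)).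
Proof.
case=> mRe mIm f0 f2.
have mnorm (g : R -> R) : measurable_fun [set: R] g -> measurable_fun [set: R] (fun x => `|g x|).
  exact: measurableT_comp (@normr_measurable R setT).
have sq_bound (t : R) : `|t| <= 1 / 2 + t ^+ 2.
  by case: (lerP 0 t) => t0; [rewrite ger0_norm|rewrite ltr0_norm]; nra.
(* On [0, 1], |t| <= 1/2 + t^2 dominates the L^1 norm by 1 plus the L^2 norm. *)
apply: (@le_integrable _ _ _ mu [set: R] measurableT _
  ((fun x => (\1_`[0%R, 1%R] x)%:E) \+ (fun x => (sqmod (f x))%:E))%E) => //.
- by apply/measurable_EFinP; apply: measurable_funD; exact: mnorm.
- move=> x _; rewrite /= lee_fin [leLHS]ger0_norm ?addr_ge0 //.
  rewrite [leRHS]ger0_norm; last by rewrite addr_ge0 ?sqmod_ge0.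
  rewrite /indic; have [x01|x01] := boolP (0 <= x <= 1).
    rewrite mem_set /=; last by rewrite in_itv.
    have := sq_bound (complex.Re (f x)); have := sq_bound (complex.Im (f x)).
    by rewrite /sqmod; lra.
  rewrite memNset /=; last by rewrite in_itv /= (negbTE x01).
  move: x01; rewrite negb_and -!ltNge => /orP x01.
  by rewrite f0 //= normr0 addr0 add0r sqmod_ge0.
apply: integrableD => //.
  apply/integrableP; split; first by apply/measurable_EFinP; exact: measurable_indic.
  under eq_integral do rewrite gee0_abs ?lee_fin//.
  rewrite integral_indic // setIT.
  exact/compact_finite_measure/segment_compact.
apply/integrableP; split.
  by apply/measurable_EFinP; apply: measurable_funD; exact: measurable_funX.
by under eq_integral do rewrite gee0_abs ?lee_fin ?sqmod_ge0//.
Qed.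

Let measurable_Re f : inH f -> measurable_fun [set: R] (fun x => complex.Re (f x)).
Proof. by case. Qed.

Let measurable_oppRe f : inH f -> measurable_fun [set: R] (fun x => - complex.Re (f x)).
Proof. by case=> mRe _ _ _; exact: measurableT_comp mRe. Qed.

Let measurable_Im f : inH f -> measurable_fun [set: R] (fun x => complex.Im (f x)).
Proof. by case. Qed.

Let integrable_normImRe f : inH f ->
  mu.-integrable [set: R] (EFin \o (fun x => `|complex.Im (f x)| + `|- complex.Re (f x)|)).
Proof.
move/integrable_normReIm; congr (_.-integrable _ _); apply: funext => x.
by rewrite /= normrN addrC.
Qed.

Lemma cintegrable_fourier_kernel f w : inH f ->
  cintegrable mu (fun x => f x * fourier_kernel w x).
Proof.
move=> Hf; split.
  under eq_fun do rewrite Re_mul_fourier_kernel.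
  exact: integrable_trig (measurable_Re Hf) (measurable_Im Hf) (integrable_normReIm Hf) w.
under eq_fun do rewrite Im_mul_fourier_kernel.
exact: integrable_trig (measurable_Im Hf) (measurable_oppRe Hf) (integrable_normImRe Hf) w.
Qed.

Lemma measurable_sqmod_fourier f : inH f ->
  measurable_fun [set: R] (fun w => sqmod (fourier f w)).
Proof.
move=> Hf; apply: measurable_funD; apply: measurable_funX; apply: continuous_measurable_fun.
  exact: continuous_Rintegral_trig (measurable_Re Hf) (measurable_Im Hf) (integrable_normReIm Hf).
have -> : (fun w => complex.Im (fourier f w)) = fun w => Rintegral mu [set: R]
    (fun x => complex.Im (f x) * cos (2 * pi * w * x) + - complex.Re (f x) * sin (2 * pi * w * x)).
  by apply: funext => w; congr Rintegral; apply: funext => x; rewrite mulNr.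
exact: continuous_Rintegral_trig (measurable_Im Hf) (measurable_oppRe Hf) (integrable_normImRe Hf).
Qed.

Lemma fourier_lincomb (I : finType) (phi : I -> R -> R[i]) (P : pred I) (a : I -> R[i]) w :
  (forall n, inH (phi n)) ->
  fourier (lincomb phi P a) w = \sum_(n | P n) a n * fourier (phi n) w.
Proof.
move=> Hphi; under [in RHS]eq_bigr do rewrite fourierE.
rewrite fourierE /lincomb -cintegral_sum; last by move=> n; exact: cintegrable_fourier_kernel.
by congr cintegral; apply: funext => x; rewrite mulr_suml; under eq_bigr do rewrite -mulrA.
Qed.

End fourier_transform.

Lemma hnorm2_scale (R : realType) (k : R) (f : R -> R[i]) : inH f ->
  hnorm2 (fun x => k%:C%C * f x) = ((k ^+ 2)%:E * hnorm2 f)%E.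
Proof.
move=> Hf; rewrite /hnorm2; under eq_integral do rewrite sqmodZ EFinM.
rewrite ge0_integralZl ?lee_fin ?sqr_ge0 //; last by move=> x _; rewrite lee_fin sqmod_ge0.
apply/measurable_EFinP; case: Hf => mRe mIm _ _.
by apply: measurable_funD; exact: measurable_funX.
Qed.

Section spans.
Variables (R : realType) (I : finType) (phi : I -> R -> R[i]).

Lemma lincomb_mask (P : pred I) (a : I -> R[i]) :
  lincomb phi P a = lincomb phi predT (fun n => if P n then a n else 0).
Proof.
apply: funext => x; rewrite /lincomb big_mkcond; apply: eq_bigr => n _.
by case: (P n); rewrite ?mul0r.
Qed.

Lemma lincombZ (P : pred I) (k : R[i]) (a : I -> R[i]) :
  lincomb phi P (fun n => k * a n) = fun x => k * lincomb phi P a x.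
Proof.
by apply: funext => x; rewrite /lincomb mulr_sumr; apply: eq_bigr => n _; rewrite mulrA.
Qed.

Variables d1 d2 : R.
Hypothesis rb : riesz_basis phi d1 d2.

Lemma riesz_basis_subfamily (P : pred I) (b : I -> R[i]) :
  ((d1 * \sum_(n | P n) sqmod (b n))%:E <= hnorm2 (lincomb phi P b))%E /\
  (hnorm2 (lincomb phi P b) <= (d2 * \sum_(n | P n) sqmod (b n))%:E)%E.
Proof.
have sqmod0 : sqmod (0 : R[i]) = 0 by rewrite /sqmod /= expr0n /= addr0.
have -> : \sum_(n | P n) sqmod (b n) = \sum_n sqmod (if P n then b n else 0).
  by rewrite big_mkcond; apply: eq_bigr => n _; case: (P n).
by case: rb => _ _ /(_ (fun n => if P n then b n else 0)); rewrite -lincomb_mask !EFinM.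
Qed.

Lemma inH_lincomb (P : pred I) (b : I -> R[i]) : inH (lincomb phi P b).
Proof.
case: rb => _ Hphi _; rewrite /lincomb; split.
- under eq_fun do rewrite Re_sum -big_filter; apply: measurable_sum => n.
  under eq_fun do rewrite complex_ReM; case: (Hphi n) => mRe mIm _ _.
  by apply: measurable_funB; apply: measurable_funM => //; exact: measurable_cst.
- under eq_fun do rewrite Im_sum -big_filter; apply: measurable_sum => n.
  under eq_fun do rewrite complex_ImM; case: (Hphi n) => mRe mIm _ _.
  by apply: measurable_funD; apply: measurable_funM => //; exact: measurable_cst.
- move=> x x01; rewrite big1 // => n _.
  by case: (Hphi n) => _ _ /(_ x x01) ->; rewrite mulr0.
have [_ /le_lt_trans] := riesz_basis_subfamily P b; apply; exact: ltry.
Qed.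

End spans.

Section fourier_monotone.
Variable R : realType.
Local Notation mu := (@lebesgue_measure R).
Local Open Scope ereal_scope.

Definition fourier_monotone (Q : (R -> R[i]) -> \bar R) : Prop :=
  forall (J : finType) (h : R -> R[i]) (g : J -> R -> R[i]) (c : J -> R),
    inH h -> (forall j, inH (g j)) -> (forall j, (0 <= c j)%R) ->
    (forall t, (sqmod (fourier h t) <= \sum_j c j * sqmod (fourier (g j) t))%R) ->
    Q h <= \sum_j (c j)%:E * Q (g j).

Lemma fourier_monotone1 (Q : (R -> R[i]) -> \bar R) (h g : R -> R[i]) (c : R) :
  fourier_monotone Q -> inH h -> inH g -> (0 <= c)%R ->
  (forall t, (sqmod (fourier h t) <= c * sqmod (fourier g t))%R) ->
  Q h <= c%:E * Q g.
Proof.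
move=> QM Hh Hg c0 hg.
have := QM 'I_1 h (fun=> g) (fun=> c) Hh (fun=> Hg) (fun=> c0).
by rewrite big_ord1; apply => t; rewrite big_ord1.
Qed.

Lemma hat_tail2_fourier_monotone (z : R) : fourier_monotone (fun h => hat_tail2 h z).
Proof.
move=> J h g c Hh Hg c0 hg; rewrite /hat_tail2.
set D := [set w : R | (z <= `|w|)%R].
have mD : measurable D.
  rewrite (_ : D = [set: R] `&` ((@Num.Def.normr _ R) @^-1` `[z, +oo[%classic)).
    by apply: normr_measurable => //; exact: measurable_itv.
  by apply/seteqP; split => x /=; rewrite ?in_itv /= ?andbT // => -[].
have mF f : inH f -> measurable_fun D (fun t => sqmod (fourier f t)).
  by move/measurable_sqmod_fourier; exact: measurable_funS.
pose G t := (\sum_j c j * sqmod (fourier (g j) t))%R.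
have mG : measurable_fun D G.
  rewrite /G; under eq_fun do rewrite -big_enum /=.
  apply: measurable_sum => j; apply: measurable_funM; first exact: measurable_cst.
  exact: mF.
apply: le_trans.
  apply: (@ge0_le_integral _ _ _ mu _ mD _ (EFin \o G)) => //.
  - by move=> t _; rewrite lee_fin sqmod_ge0.
  - by apply/measurable_EFinP; exact: mF.
  - by apply/measurable_EFinP.
  - by move=> t _; rewrite lee_fin.
rewrite /G; under eq_integral do rewrite /= -sumEFin.
rewrite ge0_integral_sum //; last 2 first.
- move=> j; apply/measurable_EFinP; apply: measurable_funM; first exact: measurable_cst.
  exact: mF.
- by move=> j t _; rewrite lee_fin mulr_ge0 ?sqmod_ge0.
apply: lee_sum => j _; under eq_integral do rewrite EFinM.
rewrite ge0_integralZl // ?lee_fin //.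
- by apply/measurable_EFinP; exact: mF.
- by move=> t _; rewrite lee_fin sqmod_ge0.
Qed.

Lemma esum_fourier_monotone (T : choiceType) (D : set T) (w : T -> R) :
  fourier_monotone (fun h => \esum_(n in D) (sqmod (fourier h (w n)))%:E).
Proof.
move=> J h g c Hh Hg c0 hg.
apply: (@le_trans _ _ (\esum_(n in D) \sum_j (c j * sqmod (fourier (g j) (w n)))%:E)).
  by apply: le_esum => n _; rewrite sumEFin lee_fin.
rewrite esum_sum; last by move=> n j _ _; rewrite lee_fin mulr_ge0 ?sqmod_ge0.
apply: lee_sum => j _; under eq_esum do rewrite EFinM.
rewrite /esum; apply: ge_ereal_sup => _ [X DX <-] /=.
rewrite -ge0_mule_fsumr; last by move=> n; rewrite lee_fin sqmod_ge0.
by apply: lee_wpmul2l; [rewrite lee_fin | apply: ereal_sup_ubound; exists X].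
Qed.

End fourier_monotone.

Section riesz_splitting.
Variables (R : realType) (I : finType) (r : nat) (part : I -> 'I_r).
Variables (phi : I -> R -> R[i]) (d1 d2 : R).
Hypothesis rb : riesz_basis phi d1 d2.
Variable Q : (R -> R[i]) -> \bar R.
Hypothesis QM : fourier_monotone Q.
Variable E : 'I_r -> \bar R.
Hypothesis E_ge0 : forall i, (0 <= E i)%E.
Hypothesis QE : forall i g, cspan phi (fun n => part n == i) g -> inH g -> hnorm2 g = 1%E ->
  (Q g <= E i)%E.

Let piece i a := lincomb phi (fun n => part n == i) a.
Let weight i (a : I -> R[i]) := \sum_(n | part n == i) sqmod (a n).

Let phi_inH n : inH (phi n). Proof. by case: rb. Qed.

Let weight_ge0 i a : 0 <= weight i a.
Proof. by apply: sumr_ge0 => n _; exact: sqmod_ge0. Qed.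

Lemma Q_piece_le i a : 0 < weight i a -> (Q (piece i a) <= (d2 * weight i a)%:E * E i)%E.
Proof.
move=> w_gt0; have [lo up] := riesz_basis_subfamily rb (fun n => part n == i) a.
have h_ge0 : (0 <= hnorm2 (piece i a))%E.
  by apply: integral_ge0 => x _; rewrite lee_fin sqmod_ge0.
have hfin : hnorm2 (piece i a) \is a fin_num.
  by rewrite ge0_fin_numE // (le_lt_trans up) ?ltry.
set c := fine (hnorm2 (piece i a)); have hc : hnorm2 (piece i a) = c%:E by rewrite fineK.
rewrite hc lee_fin in lo up.
have c_gt0 : 0 < c by apply: lt_le_trans lo; rewrite mulr_gt0 //; case: rb.
pose k := (Num.sqrt c)^-1.
have kc : k ^+ 2 * c = 1 by rewrite exprVn sqr_sqrtr ?ltW // mulVf ?gt_eqF.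
pose g := lincomb phi (fun n => part n == i) (fun n => k%:C%C * a n).
have gE : g = fun x => k%:C%C * piece i a x by rewrite /g lincombZ.
have Qg : (Q g <= E i)%E.
  apply: QE; [by exists (fun n => k%:C%C * a n) | rewrite /g; exact: (inH_lincomb rb _ _) |].
  by rewrite gE hnorm2_scale ?hc -?EFinM ?kc //; exact: (inH_lincomb rb _ _).
have Fg t : fourier g t = k%:C%C * fourier (piece i a) t.
  rewrite /g /piece !fourier_lincomb // mulr_sumr.
  by apply: eq_bigr => n _; rewrite mulrA.
have Qpiece : (Q (piece i a) <= c%:E * Q g)%E.
  apply: fourier_monotone1 QM (inH_lincomb rb _ _) (inH_lincomb rb _ _) (ltW c_gt0) _ => t.
  by rewrite Fg sqmodZ mulrA (mulrC c) kc mul1r.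
apply: le_trans Qpiece _; apply: le_trans (lee_wpmul2l _ Qg) _; first by rewrite lee_fin ltW.
by apply: lee_wpmul2r => //; rewrite lee_fin.
Qed.

Lemma Q_lincomb_le a : hnorm2 (lincomb phi predT a) = 1%E ->
  (Q (lincomb phi predT a) <= (d2 / d1)%:E * \sum_i E i)%E.
Proof.
move=> norm1; have d1_gt0 : 0 < d1 by case: rb.
set T := \sum_i weight i a.
have T_ge0 : 0 <= T by apply: sumr_ge0 => i _; exact: weight_ge0.
have [lo up] := riesz_basis_subfamily rb predT a.
have TE : \sum_(n | predT n) sqmod (a n) = T by rewrite (partition_big part predT).
rewrite norm1 !lee_fin TE in lo up.
have d2_ge0 : 0 <= d2 by nra.
have piece0 i t : weight i a = 0 -> fourier (piece i a) t = 0.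
  move=> /(psumr_eq0P (fun n _ => sqmod_ge0 (a n))) w0.
  by rewrite fourier_lincomb // big1 // => n /w0 /sqmod_eq0 ->; rewrite mul0r.
have split_Q : (Q (lincomb phi predT a) <= \sum_i (T / weight i a)%:E * Q (piece i a))%E.
  apply: QM; [exact: (inH_lincomb rb _ _) | move=> i; exact: (inH_lincomb rb _ _) | |].
    by move=> i; rewrite divr_ge0 // weight_ge0.
  move=> t; rewrite fourier_lincomb // (partition_big part predT) //=.
  under eq_bigr do rewrite -fourier_lincomb //.
  apply: le_trans (sqmod_sum_le_weighted (weight_ge0 ^~ a) (fun i => piece0 i t)) _.
  by rewrite mulr_sumr; apply: ler_sum => i _; rewrite mulrCA [leLHS]mulrC.
have piece_bound i : ((T / weight i a)%:E * Q (piece i a) <= (T * d2)%:E * E i)%E.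
  have := weight_ge0 i a; rewrite le_eqVlt => /orP[/eqP w0|w_gt0].
    by rewrite -w0 invr0 mulr0 mul0e mule_ge0 // lee_fin mulr_ge0.
  apply: le_trans (lee_wpmul2l _ (Q_piece_le w_gt0)) _; first by rewrite lee_fin divr_ge0 // ltW.
  rewrite muleA -EFinM (_ : T / weight i a * (d2 * weight i a) = T * d2) //.
  by field; rewrite gt_eqF.
apply: le_trans split_Q _; apply: le_trans; first by apply: lee_sum => i _; exact: piece_bound.
rewrite -ge0_sume_distrr //; apply: lee_wpmul2r; first exact: sume_ge0.
by rewrite lee_fin mulrC ler_wpM2l // -(ler_pM2l d1_gt0) mulfV ?gt_eqF // mulrC.
Qed.

End riesz_splitting.

Section sup_sqrte.
Variables (R : realType) (U : Type) (A : set U) (q : U -> \bar R).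
Local Open Scope ereal_scope.

Lemma ereal_sup_sqrte_le (c : \bar R) : (forall u, A u -> 0 <= q u <= c) ->
  ereal_sup ([set 0] `|` [set sqrte (q u) | u in A]) <= sqrte c.
Proof.
move=> qc; apply: ge_ereal_sup => _ [-> | [u Au <-]]; first exact: sqrte_ge0.
by have /andP[q0 qu] := qc u Au; rewrite lee_sqrt ?(le_trans q0).
Qed.

Lemma sqrte_ereal_sup_le (c : \bar R) : (forall u, A u -> 0 <= q u <= c) ->
  sqrte (ereal_sup ([set 0] `|` [set q u | u in A])) <= sqrte c.
Proof.
move=> qc; have [c0|c_lt0] := leP 0 c.
  by rewrite lee_sqrt //; apply: ge_ereal_sup => _ [-> | [u /qc /andP[_ qu] <-]].
(* for c < 0 no u satisfies A, so the supremum is 0 *)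
suff -> : ereal_sup ([set 0] `|` [set q u | u in A]) = 0 by rewrite sqrte0 sqrte_ge0.
apply/eqP; rewrite eq_le; apply/andP; split; last by apply: ereal_sup_ubound; left.
apply: ge_ereal_sup => _ [-> // | [u /qc /andP[q0 qu] <-]].
by have := le_trans q0 qu; rewrite leNgt c_lt0.
Qed.

Lemma le_sqr_ereal_sup_sqrte u : A u -> 0 <= q u ->
  q u <= ereal_sup ([set 0] `|` [set sqrte (q v) | v in A]) ^+ 2.
Proof.
move=> Au q0; rewrite -(sqr_sqrte q0) !expe2.
have le_sup : sqrte (q u) <= ereal_sup ([set 0] `|` [set sqrte (q v) | v in A]).
  by apply: ereal_sup_ubound; right; exists u.
by apply: lee_pmul => //; exact: sqrte_ge0.
Qed.

Lemma le_sqr_sqrte_ereal_sup u : A u ->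
  q u <= sqrte (ereal_sup ([set 0] `|` [set q v | v in A])) ^+ 2.
Proof.
move=> Au; rewrite sqr_sqrte; last by apply: ereal_sup_ubound; left.
by apply: ereal_sup_ubound; right; exists u.
Qed.

End sup_sqrte.

Theorem lemma5p9 (R : realType) (I : finType) (r : nat) (part : I -> 'I_r)
    (phi : I -> R -> R[i]) (d1 d2 : R) :
  riesz_basis phi d1 d2 ->
  (forall z : R, 0 <= z ->
     (Econc (cspan phi predT) z <=
      sqrte ((d2 / d1)%:E *
             \sum_(i < r) (Econc (cspan phi (fun n => part n == i)) z) ^+ 2))%E) /\
  (forall w : int -> R, fourier_frame w -> forall N : nat,
     (Etilde w (cspan phi predT) N <=
      sqrte ((d2 / d1)%:E *
             \sum_(i < r) (Etilde w (cspan phi (fun n => part n == i)) N) ^+ 2))%E).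
Proof.
move=> rb; split=> [z _ | w _ N].
- apply: ereal_sup_sqrte_le => _ [[a ->] [_ norm1]]; apply/andP; split.
    by apply: integral_ge0 => t _; rewrite lee_fin sqmod_ge0.
  apply: (Q_lincomb_le (part := part) rb (hat_tail2_fourier_monotone z)) => //.
    by move=> i; exact: sqre_ge0.
  move=> i g span_g Hg g1; apply: (le_sqr_ereal_sup_sqrte (q := fun f => hat_tail2 f z)).
    exact: (conj span_g (conj Hg g1)).
  by apply: integral_ge0 => t _; rewrite lee_fin sqmod_ge0.
- apply: sqrte_ereal_sup_le => _ [[a ->] [_ norm1]]; apply/andP; split.
    by apply: esum_ge0 => n _; rewrite lee_fin sqmod_ge0.
  apply: (Q_lincomb_le (part := part) rb (esum_fourier_monotone _ w)) => //.
    by move=> i; exact: sqre_ge0.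
  move=> i g span_g Hg g1.
  exact: (le_sqr_sqrte_ereal_sup (fun f => \esum_(n in _) (sqmod (fourier f (w n)))%:E)).
Qed.
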